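(* Let $\mathbb{S}$ be a metric space with its Borel $\sigma$-field, let $\{\mu_n\}_{n=1,2,\ldots}$ be a sequence of measures on $\mathbb{S}$ converging weakly to a finite measure $\mu$ on $\mathbb{S}$, and let $\{f_n,g_n\}_{n=1,2,\ldots}$ be measurable $[-\infty,+\infty]$-valued functions on $\mathbb{S}$ such that $f_n(s)\ge g_n(s)$ for all $n$ and $s\in\mathbb{S}$, and $$-\infty<\int_{\mathbb{S}}\limsup_{n\to\infty,\,s'\to s} g_n(s')\,\mu(ds)\le\liminf_{n\to\infty}\int_{\mathbb{S}} g_n(s)\,\mu_n(ds).$$ Then $$\int_{\mathbb{S}}\liminf_{n\to\infty,\,s'\to s} f_n(s')\,\mu(ds)\le\liminf_{n\to\infty}\int_{\mathbb{S}} f_n(s)\,\mu_n(ds).$$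
   Context: Weak convergence: $\int f\,d\mu_n\to\int f\,d\mu$ for all bounded continuous $f$. Integrals of extended-real functions are $\int f^+-\int f^-$, defined when one of these is finite; all integrals in the hypotheses are assumed defined. $\liminf_{n\to\infty,s'\to s}f_n(s'):=\sup_{n\ge1,\delta>0}\inf_{m\ge n,\,s'\in B_\delta(s)}f_m(s')$ and $\limsup_{n\to\infty,s'\to s}g_n(s'):=\inf_{n\ge1,\delta>0}\sup_{m\ge n,\,s'\in B_\delta(s)}g_m(s')$, with $B_\delta(s)$ the ball of radius $\delta$ about $s$. *)

From HB Require Import structures.
From mathcomp Require Import all_boot all_order all_algebra.
From mathcomp Require Import all_classical all_reals all_analysis measurable_realfun.
Set Implicit Arguments. Unset Strict Implicit. Unset Printing Implicit Defensive.
Import Order.TTheory GRing.Theory Num.Theory.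
Import numFieldTopology.Exports numFieldNormedType.Exports.
Local Open Scope classical_set_scope.
Local Open Scope ring_scope.

(* Nonempty metric spaces (measurable types in MathComp-Analysis are
   always pointed, i.e. nonempty). *)
#[short(type="pmetricType")]
HB.structure Definition PointedMetric (K : numDomainType) :=
  { M of Metric K M & isPointed M }.

Notation borel_of S := (g_sigma_algebraType (@open S)).

Local Open Scope ereal_scope.

Definition joint_liminf (R : realType) (S : pmetricType R)
    (f : nat -> S -> \bar R) (s : S) : \bar R :=
  ereal_sup [set x | exists (n : nat) (delta : R), (0 < delta)%R /\
     x = ereal_inf [set y | exists (m : nat) (s' : S),
                              [/\ (n <= m)%N, ball s delta s' & y = f m s']]].

Definition joint_limsup (R : realType) (S : pmetricType R)
    (g : nat -> S -> \bar R) (s : S) : \bar R :=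
  ereal_inf [set x | exists (n : nat) (delta : R), (0 < delta)%R /\
     x = ereal_sup [set y | exists (m : nat) (s' : S),
                              [/\ (n <= m)%N, ball s delta s' & y = g m s']]].

Definition integral_defined (R : realType) (S : pmetricType R)
    (mu : {measure set (borel_of S) -> \bar R}) (f : S -> \bar R) : Prop :=
  (\int[mu]_x (f ^\+) x < +oo) \/ (\int[mu]_x (f ^\-) x < +oo).

Definition weakly_converges (R : realType) (S : pmetricType R)
    (mu_ : nat -> {measure set (borel_of S) -> \bar R})
    (mu : {measure set (borel_of S) -> \bar R}) : Prop :=
  forall f : S -> R, continuous f -> (exists M : R, forall x, (`|f x| <= M)%R) ->
    (fun n => \int[mu_ n]_x (f x)%:E) @ \oo --> \int[mu]_x (f x)%:E.

(* "All integrals in the hypotheses are assumed defined": the integrals of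
   bounded continuous functions appearing in the weak-convergence hypothesis. *)
Definition weak_conv_integrals_defined (R : realType) (S : pmetricType R)
    (mu_ : nat -> {measure set (borel_of S) -> \bar R}) : Prop :=
  forall f : S -> R, continuous f -> (exists M : R, forall x, (`|f x| <= M)%R) ->
    forall n, integral_defined (mu_ n) (fun x => (f x)%:E).

(* For nonnegative h_n the joint liminf H of the h_n is lower semicontinuous,
   and it is the pointwise liminf of the bounded Lipschitz functions
     psi_N x = inf_y (min (inf_{m >= N} h_m y, N) + N d(x, y)),
   which satisfy psi_N <= h_m for m >= N.  Weak convergence applied to psi_N
   gives int psi_N dmu <= liminf_n int h_n dmu_n, and Fatou's lemma for mu
   then gives int H dmu <= liminf_n int h_n dmu_n.
   In general, take h_n = (f_n - g_n)^+: pointwise, liminf f <= liminf h +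
   limsup g wherever limsup g > -oo, which holds mu-a.e. since
   int limsup g dmu > -oo; integrating and adding the hypothesis on g, with
   h_n + g_n <= f_n, gives the claim. *)

From HB Require Import structures.
From mathcomp Require Import all_boot all_order all_algebra.
From mathcomp Require Import all_classical all_reals all_analysis measurable_realfun.
From mathcomp Require Import lra.
Import Order.TTheory GRing.Theory Num.Theory.
Import numFieldTopology.Exports numFieldNormedType.Exports.
Local Open Scope classical_set_scope.
Local Open Scope ring_scope.
Local Open Scope ereal_scope.

Section extended_real_sequences.
Context {R : realType}.
Implicit Types (x y : \bar R) (u v : (\bar R)^nat).

Lemma lee_EFin_lt x y : (forall r : R, r%:E < x -> r%:E <= y) -> x <= y.
Proof.
move=> xy; rewrite leNgt; apply/negP => yx.
have [r yr rx] : exists2 r : R, y < r%:E & r%:E < x.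
  move: yx {xy}; case: x => [t| |]; case: y => [s| |] //=.
  - rewrite lte_fin => st; exists ((s + t) / 2)%R; rewrite lte_fin.
      exact: (midf_lt st).1.
    exact: (midf_lt st).2.
  - by exists (t - 1)%R; rewrite ?ltNyr // lte_fin gtrDl ltrN10.
  - by exists (s + 1)%R; rewrite ?ltry // lte_fin ltrDl.
  - by exists 0%R; rewrite ?ltNyr ?ltry.
by have := xy r rx; rewrite leNgt yr.
Qed.

Lemma limn_einf_ge_near u a : (\forall n \near \oo, a <= u n) ->
  a <= limn_einf u.
Proof.
move=> [N _ aN]; rewrite limn_einf_lim.
apply: lime_ge; first exact: is_cvg_einfs.
exists N => // n /= Nn; apply: le_ereal_inf_tmp => _ [m /= nm <-].
exact/aN/(leq_trans Nn).
Qed.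

Lemma le_limn_einf_near u v : (\forall n \near \oo, u n <= v n) ->
  limn_einf u <= limn_einf v.
Proof.
move=> [N _ uv]; rewrite !limn_einf_lim.
apply: lee_lim; [exact: is_cvg_einfs|exact: is_cvg_einfs|].
exists N => // n /= Nn; apply: le_ereal_inf_tmp => _ [m /= nm <-].
apply: le_trans (uv m (leq_trans Nn nm)).
by apply: ereal_inf_lbound; exists m.
Qed.

Lemma le_limn_einfD u v : limn_einf u + limn_einf v <= limn_einf (u \+ v).
Proof.
have [->|uNy] := eqVneq (limn_einf u) -oo; first by rewrite leNye.
have [->|vNy] := eqVneq (limn_einf v) -oo; first by rewrite addeNy leNye.
rewrite !limn_einf_lim in uNy vNy *.
have cu : cvgn (einfs u) by exact: is_cvg_einfs.
have cv : cvgn (einfs v) by exact: is_cvg_einfs.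
have uv : limn (einfs u) +? limn (einfs v).
  by rewrite /adde_def (negbTE uNy) (negbTE vNy) !andbF.
rewrite -limeD //; apply: lee_lim; [exact: is_cvgeD|exact: is_cvg_einfs|].
apply: nearW => n; apply: le_ereal_inf_tmp => _ [m /= nm <-].
by apply: leeD; apply: ereal_inf_lbound; exists m.
Qed.

End extended_real_sequences.

Section integral_extended_real.
Context {d : measure_display} {T : measurableType d} {R : realType}
  {mu : {measure set T -> \bar R}}.
Implicit Types f g h : T -> \bar R.

Lemma ae_le_integral f g : measurable_fun setT f -> measurable_fun setT g ->
  {ae mu, forall x, f x <= g x} -> \int[mu]_x f x <= \int[mu]_x g x.
Proof.
move=> mf mg fg; rewrite [leLHS]integralE [leRHS]integralE.
apply: leeB; apply: ae_ge0_le_integral => //;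
  do ?[exact: measurable_funepos|exact: measurable_funeneg];
  apply: filterS fg => x fgx _.
- by rewrite !funeposE; apply: le_max2; rewrite ?lexx.
- by rewrite !funenegE; apply: le_max2; rewrite ?lexx ?leeN2.
Qed.

Lemma integral_funeneg_lt_pinfty_gtNy f : -oo < \int[mu]_x f x ->
  \int[mu]_x f^\- x < +oo.
Proof.
move=> fNy; rewrite ltNge leye_eq; apply/negP => /eqP fneg.
by move: fNy; rewrite integralE fneg addeNy ltxx.
Qed.

Lemma ae_gtNy_integral_funeneg f : measurable_fun setT f ->
  \int[mu]_x f^\- x < +oo -> {ae mu, forall x, -oo < f x}.
Proof.
move=> mf fneg; have : mu.-integrable setT f^\-.
  apply/integrableP; split; first exact: measurable_funeneg.
  rewrite (eq_integral (fun x => f^\- x)) // => x _.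
  by rewrite gee0_abs // funeneg_ge0.
move=> /(integrable_ae measurableT); apply: filterS => x /(_ I).
by rewrite funenegE; case: (f x) => // r _; exact: ltNyr.
Qed.

Lemma ge0_funeposD h g x : 0 <= h x ->
  (h \+ g)^\+ x + g^\- x = h x + g^\+ x + (h \+ g)^\- x.
Proof.
rewrite !funeposE !funenegE /=.
case: (h x) => [r| |] // r0; case: (g x) => [s| |].
- rewrite -EFinD -!EFinN -!EFin_max -!EFinD; congr EFin.
  rewrite lee_fin in r0; rewrite /Order.max.
  by repeat case: ifPn; rewrite ?ltNge ?negbK; move=> *; lra.
all: rewrite /adde /= ?maxye ?maxey ?maxeNy ?maxNye /=.
all: by rewrite ?adde0 ?add0e ?addey ?addye // gt_eqF // lt_max ltNy0 orbT.
Qed.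

Lemma integralD_ge0l h g : measurable_fun setT h -> measurable_fun setT g ->
  (forall x, 0 <= h x) -> \int[mu]_x g^\- x < +oo ->
  \int[mu]_x (h x + g x) = \int[mu]_x h x + \int[mu]_x g x.
Proof.
move=> mh mg h0 gneg; have mhg := emeasurable_funD mh mg.
have [mhgp mhgn] := (measurable_funepos mhg, measurable_funeneg mhg).
have [mgp mgn] := (measurable_funepos mg, measurable_funeneg mg).
have gneg_fin : \int[mu]_x g^\- x \is a fin_num.
  by rewrite ge0_fin_numE // integral_ge0 // => x _; exact: funeneg_ge0.
have hgneg_fin : \int[mu]_x (h \+ g)^\- x \is a fin_num.
  rewrite ge0_fin_numE; last by apply: integral_ge0 => x _; exact: funeneg_ge0.
  apply: le_lt_trans gneg; apply: ge0_le_integral => // x _.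
  by rewrite !funenegE; apply: le_max2; rewrite ?lexx // leeN2 leeDr.
(* Both sides of [ge0_funeposD] are sums of nonnegative functions, so it
   integrates termwise; the two finite negative parts then cancel. *)
have sum_eq : \int[mu]_x (h \+ g)^\+ x + \int[mu]_x g^\- x =
    \int[mu]_x h x + \int[mu]_x g^\+ x + \int[mu]_x (h \+ g)^\- x.
  rewrite -!ge0_integralD //; do ?[exact: emeasurable_funD];
    do ?[by move=> x _; rewrite ?adde_ge0 ?funepos_ge0 ?funeneg_ge0].
  by apply: eq_integral => x _; exact: ge0_funeposD.
rewrite [LHS]integralE (integralE _ _ g) addeA.
have -> : \int[mu]_x h x + \int[mu]_x g^\+ x =
    \int[mu]_x (h \+ g)^\+ x + \int[mu]_x g^\- x - \int[mu]_x (h \+ g)^\- x.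
  by rewrite sum_eq addeK.
by rewrite addeAC addeK.
Qed.

Lemma le_integralD_ge0l h g : measurable_fun setT h -> measurable_fun setT g ->
  (forall x, 0 <= h x) ->
  \int[mu]_x h x + \int[mu]_x g x <= \int[mu]_x (h x + g x).
Proof.
move=> mh mg h0; have [gneg|] := ltP (\int[mu]_x g^\- x) +oo.
  by rewrite integralD_ge0l.
rewrite leye_eq => /eqP gneg.
(* [-oo] is absorbing for [+] in \bar R, even against [+oo]. *)
by rewrite [X in _ + X]integralE gneg /= !addeNy leNye.
Qed.

End integral_extended_real.

Section borel_measurability.
Variables (R : realType) (T : ptopologicalType).

Lemma measurable_fun_open_gt (F : T -> \bar R) :
  (forall a : R, open [set x | a%:E < F x]) ->
  measurable_fun [set: borel_of T] (F : borel_of T -> \bar R).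
Proof.
move=> oF; apply: (measurability _ (ErealGenOInfty.measurableE R)).
move=> /= _ [_ [a ->]] <-; apply: measurableI => //.
by rewrite preimage_itvoy; apply: sub_sigma_algebra; exact: oF.
Qed.

Lemma measurable_fun_open_lt (F : T -> \bar R) :
  (forall a : R, open [set x | F x < a%:E]) ->
  measurable_fun [set: borel_of T] (F : borel_of T -> \bar R).
Proof.
move=> oF; apply: (measurability _ (ErealGenInftyO.measurableE R)).
move=> /= _ [_ [a ->]] <-; apply: measurableI => //.
by rewrite preimage_itvNyo; apply: sub_sigma_algebra; exact: oF.
Qed.

Lemma continuous_measurable_fun_EFin (f : T -> R) : continuous f ->
  measurable_fun [set: borel_of T] ((EFin \o f) : borel_of T -> \bar R).
Proof.
move=> cf; apply: measurable_fun_open_gt => a.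
have -> : [set x | a%:E < (EFin \o f) x] = f @^-1` `]a, +oo[%classic.
  by apply/seteqP; split => x /=; rewrite in_itv /= andbT lte_fin.
by apply: open_comp; [move=> x _; exact: cf|exact: rray_open].
Qed.

End borel_measurability.

Lemma lipschitz_continuous_mdist (R : realType) (M : metricType R)
    (f : M -> R) (k : R) :
  (forall x y, f x <= f y + k * mdist x y)%R -> continuous f.
Proof.
move=> fk x; apply/cvgrPdist_lt => e e0.
have k1 : (0 < `|k| + 1)%R by rewrite ltr_wpDl.
apply/nbhs_ballP; exists (e / (`|k| + 1))%R; first by rewrite /= divr_gt0.
move=> z; rewrite ballEmdist /= ltr_pdivlMr // => dz.
have := fk x z; have := fk z x; rewrite metric_sym.
have := mdist_ge0 x z; have := ler_norm k; have := ler_normr k.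
rewrite ltr_norml; nra.
Qed.

Section joint_liminf_limsup.
Context {R : realType} {S : pmetricType R}.
Implicit Types (f g h : nat -> S -> \bar R) (r : R) (s : S).

Definition ball_einf f n r s : \bar R := ereal_inf
  [set y | exists m s', [/\ (n <= m)%N, ball s r s' & y = f m s']].

Definition ball_esup g n r s : \bar R := ereal_sup
  [set y | exists m s', [/\ (n <= m)%N, ball s r s' & y = g m s']].

Lemma ball_einf_le f n r s m s' : (n <= m)%N -> ball s r s' ->
  ball_einf f n r s <= f m s'.
Proof. by move=> nm ss'; apply: ereal_inf_lbound; exists m, s'. Qed.

Lemma ball_esup_ge g n r s m s' : (n <= m)%N -> ball s r s' ->
  g m s' <= ball_esup g n r s.
Proof. by move=> nm ss'; apply: ereal_sup_ubound; exists m, s'. Qed.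

Lemma ball_einf_le_joint_liminf f n r s : (0 < r)%R ->
  ball_einf f n r s <= joint_liminf f s.
Proof. by move=> r0; apply: ereal_sup_ubound; exists n, r. Qed.

Lemma joint_limsup_le_ball_esup g n r s : (0 < r)%R ->
  joint_limsup g s <= ball_esup g n r s.
Proof. by move=> r0; apply: ereal_inf_lbound; exists n, r. Qed.

Lemma open_joint_liminf_gt f (a : R) : open [set s | a%:E < joint_liminf f s].
Proof.
rewrite openE => s /= /ereal_sup_gt [_ [n [r [r0 ->]]] ar].
have r20 : (0 < r / 2)%R by rewrite divr_gt0.
apply/nbhs_ballP; exists (r / 2)%R => // z sz /=; apply: (lt_le_trans ar).
apply: le_trans (ball_einf_le_joint_liminf f n _ z r20).
apply: ereal_inf_le_tmp => _ [m [w [nm zw ->]]]; exists m, w; split => //.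
by rewrite [r]splitr; exact: ball_triangle sz zw.
Qed.

Lemma open_joint_limsup_lt g (a : R) : open [set s | joint_limsup g s < a%:E].
Proof.
rewrite openE => s /= /ereal_inf_lt [_ [n [r [r0 ->]]] ra].
have r20 : (0 < r / 2)%R by rewrite divr_gt0.
apply/nbhs_ballP; exists (r / 2)%R => // z sz /=; apply: le_lt_trans ra.
apply: le_trans (joint_limsup_le_ball_esup g n _ z r20) _.
apply: ereal_sup_le => _ [m [w [nm zw ->]]]; exists m, w; split => //.
by rewrite [r]splitr; exact: ball_triangle sz zw.
Qed.

Lemma measurable_joint_liminf f :
  measurable_fun [set: borel_of S] (joint_liminf f : borel_of S -> \bar R).
Proof. apply: measurable_fun_open_gt; exact: open_joint_liminf_gt. Qed.

Lemma measurable_joint_limsup g :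
  measurable_fun [set: borel_of S] (joint_limsup g : borel_of S -> \bar R).
Proof. apply: measurable_fun_open_lt; exact: open_joint_limsup_lt. Qed.

Lemma joint_liminf_ge0 h : (forall n s, 0 <= h n s) ->
  forall s, 0 <= joint_liminf h s.
Proof.
move=> h0 s; apply: le_trans (ball_einf_le_joint_liminf h 0 _ s ltr01).
by apply: le_ereal_inf_tmp => _ [m [z [_ _ ->]]].
Qed.

Lemma joint_liminf_le_addl f g h s :
  (forall n s, f n s - g n s <= h n s) ->
  -oo < joint_liminf h s -> -oo < joint_limsup g s ->
  joint_liminf f s <= joint_liminf h s + joint_limsup g s.
Proof.
move=> fgh hNy; case Eg: (joint_limsup g s) => [t| |] // _; last first.
  by rewrite addey ?leey // gt_eqF.
apply: lee_EFin_lt => a /ereal_sup_gt [_ [n1 [r1 [r10 ->]]] a1].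
(* Near s and for large n, f > a and g < t + e, so h >= f - g > a - (t + e). *)
rewrite -leeBlDr // -EFinB; apply/lee_addgt0Pr => e e0.
rewrite -leeBlDr // -EFinB -addrA -opprD.
have /ereal_inf_lt [_ [n2 [r2 [r20 ->]]] t2] : joint_limsup g s < (t + e)%:E.
  by rewrite Eg lte_fin ltrDl.
have r0 : (0 < Num.min r1 r2)%R by rewrite lt_min r10 r20.
apply: le_trans (ball_einf_le_joint_liminf h (maxn n1 n2) _ s r0).
apply: le_ereal_inf_tmp => _ [m [z [nm sz ->]]].
have [n1m n2m] := (leq_trans (leq_maxl _ _) nm, leq_trans (leq_maxr _ _) nm).
have sz1 : ball s r1 z by apply: le_ball sz; rewrite ge_min lexx.
have sz2 : ball s r2 z by apply: le_ball sz; rewrite ge_min lexx orbT.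
apply: le_trans (fgh m z); rewrite EFinB; apply: leeB.
  by apply: le_trans (ltW a1) _; exact: ball_einf_le.
by apply: le_trans (ltW t2); exact: ball_esup_ge.
Qed.

End joint_liminf_limsup.

Section lipschitz_approximation.
Context {R : realType} {S : pmetricType R} (h : nat -> S -> \bar R).
Hypothesis h0 : forall n s, 0 <= h n s.

Definition tail_inf_trunc (N : nat) (y : S) : \bar R :=
  mine (einfs (h^~ y) N) N%:R%:E.

(* The Pasch-Hausdorff envelope: the largest N-Lipschitz function below
   [tail_inf_trunc N]. *)
Definition lip_env (N : nat) (x : S) : \bar R :=
  ereal_inf [set tail_inf_trunc N y + (N%:R * mdist x y)%:E | y in [set: S]].

Definition lip_approx (N : nat) (x : S) : R := fine (lip_env N x).

Lemma tail_inf_trunc_ge0 N y : 0 <= tail_inf_trunc N y.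
Proof.
by rewrite le_min lee_fin ler0n andbT; apply: le_ereal_inf_tmp => _ [m _ <-].
Qed.

Lemma tail_inf_trunc_le N m y : (N <= m)%N -> tail_inf_trunc N y <= h m y.
Proof.
move=> Nm; rewrite ge_min; apply/orP; left.
by apply: ereal_inf_lbound; exists m.
Qed.

Lemma lip_env_le N x : lip_env N x <= tail_inf_trunc N x.
Proof.
by apply: ereal_inf_lbound; exists x => //; rewrite mdistxx mulr0 adde0.
Qed.

Lemma lip_env_ge0 N x : 0 <= lip_env N x.
Proof.
apply: le_ereal_inf_tmp => _ [y _ <-].
by rewrite adde_ge0 ?tail_inf_trunc_ge0 // lee_fin mulr_ge0 ?mdist_ge0.
Qed.

Lemma lip_approxE N x : (lip_approx N x)%:E = lip_env N x.
Proof.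
rewrite fineK // ge0_fin_numE ?lip_env_ge0 //.
apply: le_lt_trans (lip_env_le N x) _; apply: le_lt_trans (ltry N%:R).
by rewrite ge_min lexx orbT.
Qed.

Lemma lip_approx_ge0 N x : (0 <= lip_approx N x)%R.
Proof. by rewrite -lee_fin lip_approxE lip_env_ge0. Qed.

Lemma lip_approx_le N x : (lip_approx N x <= N%:R)%R.
Proof.
rewrite -lee_fin lip_approxE; apply: le_trans (lip_env_le N x) _.
by rewrite ge_min lexx orbT.
Qed.

Lemma lip_approx_le_h N m x : (N <= m)%N -> (lip_approx N x)%:E <= h m x.
Proof.
move=> Nm; rewrite lip_approxE; apply: le_trans (lip_env_le N x) _.
exact: tail_inf_trunc_le.
Qed.

Lemma lip_approx_lipschitz N x x' :
  (lip_approx N x <= lip_approx N x' + N%:R * mdist x x')%R.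
Proof.
rewrite -lee_fin EFinD !lip_approxE -leeBlDr //.
apply: le_ereal_inf_tmp => _ [y _ <-]; rewrite leeBlDr // -addeA -EFinD -mulrDr.
apply: le_trans (_ : _ <= tail_inf_trunc N y + (N%:R * mdist x y)%:E) _.
  by apply: ereal_inf_lbound; exists y.
by apply: leeD => //; rewrite lee_fin ler_wpM2l // addrC metric_triangle.
Qed.

Lemma continuous_lip_approx N : continuous (lip_approx N).
Proof. exact: lipschitz_continuous_mdist (lip_approx_lipschitz N). Qed.

Lemma joint_liminf_le_limn_einf_lip_approx x :
  joint_liminf h x <= limn_einf (fun N => (lip_approx N x)%:E).
Proof.
apply: lee_EFin_lt => a /ereal_sup_gt [_ [n [r [r0 ->]]] ar].
apply: limn_einf_ge_near; near=> N; rewrite lip_approxE.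
(* Each term of the infimum is at least a: for y near x because h_m y >= a
   there, for y far from x because N * mdist x y >= N * r > a. *)
apply: le_ereal_inf_tmp => _ [y _ <-].
have [xy|yx] := ltP (mdist x y) r.
- rewrite -[a%:E]adde0; apply: leeD;
    last by rewrite lee_fin mulr_ge0 ?mdist_ge0.
  rewrite le_min; apply/andP; split.
    apply: le_ereal_inf_tmp => _ [m /= Nm <-]; apply: le_trans (ltW ar) _.
    apply: ball_einf_le; last by rewrite ballEmdist.
    by apply: leq_trans Nm; near: N; exact: nbhs_infty_ge.
  by rewrite lee_fin ltW //; near: N; exact: nbhs_infty_gtr.
- rewrite -[a%:E]add0e; apply: leeD; first exact: tail_inf_trunc_ge0.
  rewrite lee_fin; apply: le_trans (ler_wpM2l (ler0n _ N) yx).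
  rewrite -ler_pdivrMr // ltW //; near: N; exact: nbhs_infty_gtr.
Unshelve. all: by end_near. Qed.

End lipschitz_approximation.

Theorem ge0_weak_fatou {R : realType} {S : pmetricType R}
    {mu_ : nat -> {measure set (borel_of S) -> \bar R}}
    {mu : {measure set (borel_of S) -> \bar R}} {h : nat -> S -> \bar R} :
  weakly_converges mu_ mu ->
  (forall n, measurable_fun [set: borel_of S] (h n : borel_of S -> \bar R)) ->
  (forall n s, 0 <= h n s) ->
  \int[mu]_s joint_liminf h s <= limn_einf (fun n => \int[mu_ n]_s h n s).
Proof.
move=> wc mh h0; set L := limn_einf _.
have mpsi N : measurable_fun [set: borel_of S]
    ((EFin \o lip_approx h N) : borel_of S -> \bar R).
  by apply: continuous_measurable_fun_EFin; exact: continuous_lip_approx.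
have psi0 N (s : borel_of S) : setT s -> 0 <= (EFin \o lip_approx h N) s.
  by rewrite /= lee_fin lip_approx_ge0.
have int_psi_le N : \int[mu]_s (lip_approx h N s)%:E <= L.
  have psi_bounded : exists M, forall s, (`|lip_approx h N s| <= M)%R.
    by exists N%:R => s; rewrite ger0_norm ?lip_approx_ge0 ?lip_approx_le.
  have cvg_int := wc _ (continuous_lip_approx _ h0 N) psi_bounded.
  rewrite -(cvg_limn_einf_sup cvg_int).1; apply: le_limn_einf_near; near=> n.
  have Nn : (N <= n)%N by near: n; exact: nbhs_infty_ge.
  apply: ge0_le_integral => //; [exact: psi0|exact: mpsi|].
  by move=> s _; exact: lip_approx_le_h.
apply: (@le_trans _ _ (\int[mu]_s limn_einf (fun N => (lip_approx h N s)%:E))).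
  apply: ge0_le_integral => //.
  - by move=> s _; exact: joint_liminf_ge0.
  - exact: measurable_joint_liminf.
  - rewrite /limn_einf; apply: measurableT_comp => //.
    apply: measurable_fun_limn_esup => N.
    by apply: measurableT_comp => //; exact: mpsi.
  - by move=> s _; exact: joint_liminf_le_limn_einf_lip_approx.
apply: le_trans (fatou _ _ mpsi psi0) _ => //.
rewrite -[X in _ <= X](cvg_limn_einf_sup (cvg_cst L)).1.
by apply: le_limn_einf_near; apply: nearW.
Unshelve. all: by end_near. Qed.

Lemma funeposB_add_le (T : Type) (R : realDomainType) (f g : T -> \bar R) x :
  g x <= f x -> (f \- g)^\+ x + g x <= f x.
Proof.
rewrite funeposE /=; case: (g x) => [r| |] gf.
- by rewrite max_l ?subeK // suber_ge0.
- by move: gf; rewrite leye_eq => /eqP ->; exact: leey.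
- by rewrite addeNy leNye.
Qed.

Theorem corollary2p7 (R : realType) (S : pmetricType R)
  (mu_ : nat -> {measure set (borel_of S) -> \bar R})
  (mu : {measure set (borel_of S) -> \bar R})
  (f g : nat -> S -> \bar R) :
  mu setT < +oo ->
  weak_conv_integrals_defined mu_ ->
  weakly_converges mu_ mu ->
  (forall n, measurable_fun [set: borel_of S] (f n : borel_of S -> \bar R)) ->
  (forall n, measurable_fun [set: borel_of S] (g n : borel_of S -> \bar R)) ->
  (forall n s, g n s <= f n s) ->
  integral_defined mu (joint_limsup g) ->
  (forall n, integral_defined (mu_ n) (g n)) ->
  -oo < \int[mu]_s joint_limsup g s ->
  \int[mu]_s joint_limsup g s <= limn_einf (fun n => \int[mu_ n]_s g n s) ->
  \int[mu]_s joint_liminf f s <= limn_einf (fun n => \int[mu_ n]_s f n s).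
Proof.
move=> _ _ wc mf mg gf _ _ intG_gtNy intG_le.
pose h n := (f n \- g n)^\+.
have h0 n s : 0 <= h n s by exact: funepos_ge0.
have mh n : measurable_fun [set: borel_of S] (h n : borel_of S -> \bar R).
  by apply: measurable_funepos; exact: emeasurable_funB.
have mF := measurable_joint_liminf f.
have mH := measurable_joint_liminf h.
have mG := measurable_joint_limsup g.
have intG_neg := integral_funeneg_lt_pinfty_gtNy _ intG_gtNy.
apply: (@le_trans _ _ (\int[mu]_s (joint_liminf h s + joint_limsup g s))).
  apply: ae_le_integral => //; first exact: emeasurable_funD.
  apply: filterS (ae_gtNy_integral_funeneg _ mG intG_neg) => s.
  apply: joint_liminf_le_addl => [n z|].
    by rewrite /h funeposE le_max lexx.
  by rewrite (lt_le_trans _ (joint_liminf_ge0 _ h0 s)) // ltNy0.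
rewrite integralD_ge0l //; last exact: joint_liminf_ge0.
apply: le_trans (leeD (ge0_weak_fatou wc mh h0) intG_le) _.
apply: le_trans (le_limn_einfD _ _) _.
apply: le_limn_einf_near; apply: nearW => n /=.
apply: le_trans (le_integralD_ge0l _ _ (mh n) (mg n) (h0 n)) _.
apply: ae_le_integral; [exact: emeasurable_funD|exact: mf|].
by apply: aeW => s; exact: funeposB_add_le.
Qed.
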